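(* Let $T$ be a weighted tree that is not a star. If $T$ has at least two adjacent pendant edges (two pendant edges sharing a vertex), then $T^{\#}$ is not a tree.
   Context: A weighted tree has a nonzero real weight on each edge; its adjacency matrix $A$ has $(i,j)$ entry equal to the weight of edge $v_iv_j$, or $0$ if no edge. $A^{\#}$ is the group inverse of $A$ (unique $X$ with $AXA=A$, $XAX=X$, $AX=XA$). The group inverse graph $T^{\#}$ is the weighted graph on the same vertex set as $T$ with $v_iv_j$ an edge iff $(A^{\#})_{ij}\neq0$, weighted by that entry. A pendant edge is an edge incident to a vertex of degree one. *)

From HB Require Import structures.
From mathcomp Require Import all_boot all_order all_algebra.
Set Implicit Arguments. Unset Strict Implicit. Unset Printing Implicit Defensive.
Import Order.TTheory GRing.Theory Num.Theory.
Local Open Scope ring_scope.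

Section Graphs.
Variable T : finType.
Implicit Type e : rel T.

Definition simple_graph e : Prop :=
  (forall x, ~~ e x x) /\ (forall x y, e x y = e y x).

Definition connected_graph e : Prop := forall x y, connect e x y.

Definition acyclic e : Prop :=
  forall c : seq T, uniq c -> (3 <= size c)%N -> ~~ cycle e c.

Definition is_tree e : Prop := simple_graph e /\ connected_graph e /\ acyclic e.

Definition degree e (x : T) : nat := #|[set y | e x y]|.

Definition is_star e : Prop := is_tree e /\ exists c, forall v, v != c -> e c v.

Definition pendant_edge e (x y : T) : bool :=
  e x y && ((degree e x == 1%N) || (degree e y == 1%N)).

Definition has_adjacent_pendant_edges e : Prop :=
  exists x y z, [/\ x != z, pendant_edge e x y & pendant_edge e y z].
End Graphs.

(* The (weighted) graph underlying a square matrix: v_i v_j is an edge iff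
   i != j and the (i,j) entry is nonzero (the weight is that entry). *)
Definition mx_graph (R : nzRingType) (n : nat) (M : 'M[R]_n) : rel 'I_n :=
  fun i j => (i != j) && (M i j != 0).

Definition weighted_tree_adj (R : nzRingType) (n : nat) (A : 'M[R]_n) : Prop :=
  A^T = A /\ (forall i, A i i = 0) /\ is_tree (mx_graph A).

Definition group_inverse (R : nzRingType) (n : nat) (A X : 'M[R]_n) : Prop :=
  [/\ A *m X *m A = A, X *m A *m X = X & A *m X = X *m A].

From HB Require Import structures.
From mathcomp Require Import all_boot all_order all_algebra.
From mathcomp Require Import ring.
Import Order.TTheory GRing.Theory Num.Theory.
Local Open Scope ring_scope.

(* Let x and z be the two leaves hanging at y, and write A# for the group
   inverse.  From A# = A (A#)^2 the rows of A# at x and z are proportional, so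
   x and z have the same neighbours in the graph of A#; in a tree such twins
   are leaves with a common neighbour i.  Reading A = A# A^2 along row x gives
   A_x = A#_xi (A^2)_i.  Row x of A is supported at y, so if i <> y then
   (A^2)_ii = sum_k A_ik^2 = 0, row i of A vanishes and so would A_xy; hence
   i = y.  But then (A^2)_yp = 0 for every p <> y, whereas a tree that is not a star has a path y - u - p with
   (A^2)_yp = A_yu A_up <> 0. *)

Section TreeFacts.
Context {T : finType} {e : rel T}.

Lemma degree1_nbr {x y k} : degree e x = 1%N -> e x y -> e x k -> k = y.
Proof.
move=> /eqP /cards1P [w Nx] exy exk.
have : y \in [set y | e x y] by rewrite inE.
have : k \in [set y | e x y] by rewrite inE.
by rewrite Nx !inE => /eqP -> /eqP ->.
Qed.

Lemma connect_closed (S : pred T) {a b} :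
  (forall u v, e u v -> S u -> S v) -> connect e a b -> S a -> S b.
Proof.
move=> closedS /connectP [p + ->].
by elim: p a => [|c p IHp] a //= /andP [eac /IHp IH] Sa; apply/IH/(closedS a).
Qed.

Hypothesis tree_e : is_tree e.

Let e_sym x y : e x y = e y x. Proof. by case: tree_e => [[_ ->]]. Qed.
Let e_irr x : e x x = false. Proof. by case: tree_e => [[/(_ x) /negbTE]]. Qed.
Let e_neq {x y} : e x y -> x != y. Proof. by apply: contraTneq => ->; rewrite e_irr. Qed.

Lemma tree_no_triangle {x y z} : e x y -> e y z -> e z x -> False.
Proof.
move=> exy eyz ezx; have [_ [_ /(_ [:: x; y; z])]] := tree_e.
have xz : x != z by rewrite eq_sym (e_neq ezx).
rewrite /= !inE negb_or (e_neq exy) (e_neq eyz) xz.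
by rewrite exy eyz ezx => /(_ isT isT).
Qed.

Lemma tree_no_square {x y z w} :
  x != z -> y != w -> e x y -> e y z -> e z w -> e w x -> False.
Proof.
move=> xz yw exy eyz ezw ewx; have [_ [_ /(_ [:: x; y; z; w])]] := tree_e.
have xw : x != w by rewrite eq_sym (e_neq ewx).
rewrite /= !inE !negb_or (e_neq exy) xz xw (e_neq eyz) yw.
by rewrite (e_neq ezw) exy eyz ezw ewx => /(_ isT isT).
Qed.

Lemma adjacent_pendant_leaves :
  has_adjacent_pendant_edges e ->
  exists x y z, [/\ x != z, e x y, e z y, degree e x = 1%N & degree e z = 1%N].
Proof.
move=> [x [y [z [xz /andP [exy dxy] /andP [eyz dyz]]]]].
have dy : degree e y != 1%N.
  have eyx : e y x by rewrite e_sym.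
  by apply: contra xz => /eqP dy1; rewrite (degree1_nbr dy1 eyz eyx).
exists x, y, z; split=> //; first by rewrite e_sym.
all: apply/eqP.
  by rewrite (negbTE dy) orbF in dxy.
by rewrite (negbTE dy) in dyz.
Qed.

Lemma tree_twin_leaf {x z y} :
  x != z -> y != x -> y != z ->
  (forall k, k != x -> k != z -> e x k = e z k) ->
  exists i, [/\ i != z, e x i & forall k, e x k -> k = i].
Proof.
move=> xz yx yz twin.
have [/existsP [i /and3P [ix iz exi]] | /existsPn no_nbr] :=
  boolP [exists i, [&& i != x, i != z & e x i]]; last first.
  have closed_xz u v : e u v -> (u == x) || (u == z) -> (v == x) || (v == z).
    move=> euv /orP [] /eqP ?; subst u; move: euv; apply: contraTT => /norP [vx vz].
      by move: (no_nbr v); rewrite vx vz.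
    by rewrite -twin //; move: (no_nbr v); rewrite vx vz.
  have [_ [conn _]] := tree_e.
  have := connect_closed (fun w => (w == x) || (w == z)) closed_xz (conn x y).
  by rewrite eqxx (negbTE yx) (negbTE yz) => /(_ isT).
have eiz : e i z by rewrite e_sym -twin.
exists i; split=> // k exk.
have kx : k != x by rewrite eq_sym e_neq.
have kz : k != z.
  apply: contraTneq exk => ->; apply/negP => exz.
  by apply: (tree_no_triangle exi eiz); rewrite e_sym.
case: (eqVneq k i) => // ki; exfalso.
apply: (tree_no_square xz _ exi eiz (_ : e z k)); first by rewrite eq_sym.
  by rewrite -twin.
by rewrite e_sym.
Qed.

Lemma tree_common_nbr {y u p k} :
  y != p -> e y u -> e u p -> e y k -> e k p -> k = u.
Proof.
move=> yp eyu eup eyk ekp; case: (eqVneq k u) => // ku; exfalso.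
apply: (tree_no_square (w := k) yp _ eyu eup); first by rewrite eq_sym.
  by rewrite e_sym.
by rewrite e_sym.
Qed.

Lemma not_star_path2 y :
  ~ is_star e -> exists u p, [/\ e y u, e u p & p != y].
Proof.
move=> not_star.
have [/existsP [u /existsP [p /and3P [eyu eup py]]] | /existsPn no_path2] :=
  boolP [exists u, exists p, [&& e y u, e u p & p != y]]; first by exists u, p.
exfalso; apply: not_star; split=> //; exists y => v vy.
have closed_ball s t : e s t -> (s == y) || e y s -> (t == y) || e y t.
  move=> est /orP [/eqP sy|eys]; first by rewrite -sy est orbT.
  by move/existsPn: (no_path2 s) => /(_ t); rewrite eys est /= negbK => ->.
have [_ [conn _]] := tree_e.
have := connect_closed (fun w => (w == y) || e y w) closed_ball (conn y v).
by rewrite eqxx (negbTE vy) => /(_ isT).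
Qed.

End TreeFacts.

Lemma mulmx_row_supp {R : nzRingType} {m n p} {M : 'M[R]_(m, n)} {N : 'M_(n, p)}
    {x y k} :
  (forall j, j != y -> M x j = 0) -> (M *m N) x k = M x y * N y k.
Proof.
move=> Mx0; rewrite mxE (bigD1 y) //= big1 ?addr0 // => j /Mx0 ->.
by rewrite mul0r.
Qed.

Lemma mulmx_trmx_diag_eq0 {R : realDomainType} {m n} {M : 'M[R]_(m, n)} {i} :
  (M *m M^T) i i = 0 -> forall k, M i k = 0.
Proof.
have -> : (M *m M^T) i i = \sum_j M i j ^+ 2.
  by rewrite mxE; apply: eq_bigr => j _; rewrite mxE expr2.
move=> /psumr_eq0P sq0 k; apply/eqP; rewrite -sqrf_eq0 sq0 // => j _.
exact: sqr_ge0.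
Qed.

Section MatrixGraph.
Context {R : nzRingType} {n : nat} {A : 'M[R]_n}.
Hypothesis A_diag0 : forall i, A i i = 0.

Lemma mx_graph_nz {i j} : A i j != 0 -> mx_graph A i j.
Proof.
move=> Aij; rewrite /mx_graph Aij andbT.
by apply: contraNneq Aij => ->; rewrite A_diag0.
Qed.

Lemma mx_graph_leaf_row {x y} :
  degree (mx_graph A) x = 1%N -> mx_graph A x y -> forall k, k != y -> A x k = 0.
Proof.
move=> dx exy k; apply: contraNeq => /mx_graph_nz exk.
by rewrite (degree1_nbr dx exy exk).
Qed.

Lemma mx_graph_tree_sqr {y u p} :
  is_tree (mx_graph A) -> y != p -> mx_graph A y u -> mx_graph A u p ->
  (A *m A) y p = A y u * A u p.
Proof.
move=> treeA yp eyu eup; rewrite mxE (bigD1 u) //= big1 ?addr0 // => k ku.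
have [Ayk0|/mx_graph_nz eyk] := eqVneq (A y k) 0; first by rewrite Ayk0 mul0r.
have [Akp0|/mx_graph_nz ekp] := eqVneq (A k p) 0; first by rewrite Akp0 mulr0.
by move: ku; rewrite (tree_common_nbr treeA yp eyu eup eyk ekp) eqxx.
Qed.

End MatrixGraph.

Lemma mx_graph_proportional_rows {R : idomainType} {n} {M : 'M[R]_n} {x z a b} :
  a != 0 -> b != 0 -> (forall k, M x k * a = M z k * b) ->
  forall k, k != x -> k != z -> mx_graph M x k = mx_graph M z k.
Proof.
move=> a0 b0 prop k kx kz; rewrite /mx_graph !(eq_sym _ k) kx kz /=.
by rewrite -(mulIr_eq0 _ (mulIf a0)) prop (mulIr_eq0 _ (mulIf b0)).
Qed.

Lemma group_inverse_leaf_rows {R : comNzRingType} {n} {A X : 'M[R]_n} {x z y} :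
  group_inverse A X ->
  (forall k, k != y -> A x k = 0) -> (forall k, k != y -> A z k = 0) ->
  forall k, X x k * A z y = X z k * A x y.
Proof.
move=> [_ XAX AX_XA] Ax0 Az0 k.
have XE : X = A *m (X *m X) by rewrite mulmxA AX_XA XAX.
rewrite [in X x k]XE [in X z k]XE (mulmx_row_supp Ax0) (mulmx_row_supp Az0).
ring.
Qed.

Lemma leaf_row_sqr_center {R : realDomainType} {n} {A : 'M[R]_n} {x y i c} :
  A^T = A -> (forall j, j != y -> A x j = 0) -> A x y != 0 ->
  (forall j, A x j = c * (A *m A) i j) -> i = y.
Proof.
move=> A_sym Ax0 Axy rowA.
have c0 : c != 0 by apply: contraNneq Axy => c0; rewrite rowA c0 mul0r.
apply/eqP; apply: contraNT Axy => iy.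
have Ai0 k : A i k = 0.
  apply: mulmx_trmx_diag_eq0; rewrite A_sym; apply/eqP.
  by rewrite -(mulrI_eq0 _ (mulfI c0)) -rowA Ax0.
by rewrite rowA mxE big1 ?mulr0 // => k _; rewrite Ai0 mul0r.
Qed.

Lemma group_inverse_twin_leaves {R : realDomainType} {n} {A X : 'M[R]_n} {x y z} :
  (forall i, A i i = 0) -> group_inverse A X -> is_tree (mx_graph X) ->
  x != z -> mx_graph A x y -> mx_graph A z y ->
  degree (mx_graph A) x = 1%N -> degree (mx_graph A) z = 1%N ->
  exists2 i, X x i != 0 & forall j, A x j = X x i * (A *m A) i j.
Proof.
move=> A_diag0 ginv treeX xz exy ezy dx dz.
have [/andP [xy Axy] /andP [zy Azy]] := (exy, ezy).
have Ax0 := mx_graph_leaf_row A_diag0 dx exy.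
have Az0 := mx_graph_leaf_row A_diag0 dz ezy.
have rows := group_inverse_leaf_rows ginv Ax0 Az0.
have twins := mx_graph_proportional_rows Azy Axy rows.
have yx : y != x by rewrite eq_sym.
have yz : y != z by rewrite eq_sym.
have [i [iz /andP [_ Xxi] x_leaf]] := tree_twin_leaf treeX xz yx yz twins.
exists i => // j; have [AXA _ AX_XA] := ginv.
rewrite -{1}AXA AX_XA -mulmxA (mulmx_row_supp (y := i)) // => k ki.
have [->|kx] := eqVneq k x; last first.
  by apply: contraNeq ki => Xxk; apply/eqP/x_leaf; rewrite /mx_graph eq_sym kx.
have Xzx : X z x = 0.
  apply: contraTeq iz => Xzx; rewrite negbK; apply/eqP/esym/x_leaf.
  by have [[_ ->] _] := treeX; rewrite /mx_graph eq_sym xz.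
by apply/eqP; rewrite -(mulIr_eq0 _ (mulIf Azy)) rows Xzx mul0r.
Qed.

Theorem lemma2p8 (R : realFieldType) (n : nat) (A X : 'M[R]_n) :
  weighted_tree_adj A ->
  ~ is_star (mx_graph A) ->
  has_adjacent_pendant_edges (mx_graph A) ->
  group_inverse A X ->
  ~ is_tree (mx_graph X).
Proof.
move=> [A_sym [A_diag0 treeA]] not_star adj ginv treeX.
have [x [y [z [xz exy ezy dx dz]]]] := adjacent_pendant_leaves treeA adj.
have [i Xxi rowA] := group_inverse_twin_leaves A_diag0 ginv treeX xz exy ezy dx dz.
have Ax0 := mx_graph_leaf_row A_diag0 dx exy.
have Axy : A x y != 0 by case/andP: exy.
have iy := leaf_row_sqr_center A_sym Ax0 Axy rowA; subst i.
have [u [p [eyu eup py]]] := not_star_path2 treeA y not_star.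
have := rowA p; rewrite Ax0 // (mx_graph_tree_sqr A_diag0 treeA _ eyu eup).
  by apply/eqP; rewrite eq_sym !mulf_neq0 //; [case/andP: eyu | case/andP: eup].
by rewrite eq_sym.
Qed.
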